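(* Let $l,t,s,n$ be integers with $3\leq l\leq t$, $s\geq l+1$ and $n\geq 2\binom{3s}{2}$. Then $$ex(n,\{K_{l,t},M_{s+1}\})\leq (t-1)\binom{s}{l}+(l-1)n-\frac{l(l-1)}{2}+ex(2(s-l)+1,K_{l,t}).$$
   Context: All graphs are finite and simple. $ex(n,\mathscr{F})$ is the maximum number of edges of an $n$-vertex graph containing no member of $\mathscr{F}$ as a subgraph, and $ex(m,K_{l,t})=ex(m,\{K_{l,t}\})$. $K_{l,t}$ is the complete bipartite graph with parts of sizes $l,t$; $M_{s+1}$ is the matching of $s+1$ disjoint edges. *)

From mathcomp Require Import all_boot.
Set Implicit Arguments. Unset Strict Implicit. Unset Printing Implicit Defensive.

Definition simple_graph (n : nat) (E : {set 'I_n * 'I_n}) : bool :=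
  [forall x : 'I_n, forall y : 'I_n, ((x, y) \in E) == ((y, x) \in E)]
  && [forall x : 'I_n, (x, x) \notin E].

Definition nedges (n : nat) (E : {set 'I_n * 'I_n}) : nat :=
  #|[set p in E | (p.1 < p.2)%N]|.

Record pattern := Pattern { pv : nat; pe : rel 'I_pv }.

Definition contains (n : nat) (E : {set 'I_n * 'I_n}) (H : pattern) : bool :=
  [exists f : {ffun 'I_(pv H) -> 'I_n},
     injectiveb f &&
     [forall x, forall y, pe x y ==> ((f x, f y) \in E)]].

Definition ex (n : nat) (F : seq pattern) : nat :=
  \max_(E : {set 'I_n * 'I_n} | simple_graph E && all (fun H => ~~ contains E H) F)
     nedges E.

Definition Kbip (l t : nat) : pattern :=
  @Pattern (l + t) (fun i j : 'I_(l + t) => (i < l)%N != (j < l)%N).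

(* M_k: matching of k disjoint edges {2i, 2i+1}, i < k. *)
Definition Mmatch (k : nat) : pattern :=
  @Pattern (k.*2) (fun i j : 'I_(k.*2) => (i./2 == j./2) && (i != j)).

From mathcomp Require Import all_boot zify.
Set Implicit Arguments. Unset Strict Implicit. Unset Printing Implicit Defensive.

(* Let G be K_{l,t}-free without s+1 disjoint edges, B its vertices of degree > 2s+1 and
   M a maximum matching of G - B. The vertices outside B missed by M form an independent
   set F, and by maximality at most one end of each edge of M has two neighbours in F: put
   an end with at most one F-neighbour of every edge of M in P and the other end in Q.
   High-degree vertices can be added greedily to M, so |B| + |Q| <= s.
   If |B| <= l - 2, the vertex cover B, P, Q leaves at most (l-2)n + 2s(2s+1) edges, few
   enough for n >= 2 C(3s,2). Otherwise W = B + Q has between l-1 and s vertices. Edges at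
   W are bounded by double counting the l-subsets of W against their fewer than t common
   neighbours. Edges outside W lie in P + F, so there are at most e(P) + |P| of them, and
   P together with all but one vertex of Q (each joined to its mate in P) spans a
   K_{l,t}-free graph on at most 2(s-l)+1 vertices with at least e(P) + |P| - 1 edges. *)

Lemma card_sum (T : finType) (A : {pred T}) : #|A| = \sum_(x : T) (x \in A).
Proof. by rewrite -sum1_card big_mkcond /=; apply: eq_bigr => x _; case: (x \in A). Qed.

Lemma leq_bin_pred d l : 0 < l -> d <= l.-1 + 'C(d, l).
Proof.
case: l => // l _; elim: d => // d IH; rewrite binS.
have [dl|ld] := ltnP d l; first by lia.
have : 0 < 'C(d, l) by rewrite bin_gt0.
lia.
Qed.

Lemma bin2_mul2 x : 'C(x, 2) * 2 = x * x.-1.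
Proof. by have := mul_bin_diag x 1; rewrite bin1; lia. Qed.

Lemma ord_injection (T : finType) (A : {pred T}) k :
  k <= #|A| -> exists2 f : 'I_k -> T, injective f & forall i, f i \in A.
Proof.
move=> kA; exists (fun i => enum_val (widen_ord kA i)); last by move=> i; apply: enum_valP.
by move=> i j /enum_val_inj [] /val_inj.
Qed.

Lemma simple_graphP n (E : {set 'I_n * 'I_n}) :
  simple_graph E -> (forall x y, ((x, y) \in E) = ((y, x) \in E)) /\ (forall x, (x, x) \notin E).
Proof.
case/andP => /forallP Esym /forallP Eirr; split=> [x y|//].
by move/forallP: (Esym x) => /(_ y) /eqP.
Qed.

Section Graph.
Variables (n : nat) (E : {set 'I_n * 'I_n}).
Hypothesis Esym : forall x y, ((x, y) \in E) = ((y, x) \in E).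
Hypothesis Eirr : forall x, (x, x) \notin E.
Implicit Types (A B F L R S U W X Y : {set 'I_n}) (v x y : 'I_n).

(** * Counting edges between vertex sets *)

Definition nbhd v := [set u | (v, u) \in E].

(* Ordered pairs: an edge inside S1 :&: S2 is counted twice. *)
Definition arcs (S1 S2 : {set 'I_n}) := #|[set p in E | (p.1 \in S1) && (p.2 \in S2)]|.

Lemma arcs_sum (S1 S2 : {set 'I_n}) : arcs S1 S2 = \sum_(v in S1) #|nbhd v :&: S2|.
Proof.
rewrite /arcs card_sum.
transitivity (\sum_(v : 'I_n) \sum_(u : 'I_n) ((v \in S1) && (u \in nbhd v :&: S2))).
  rewrite pair_big /=; apply: eq_bigr => -[a b] _ /=.
  by rewrite !inE /=; case: ((a, b) \in E); case: (a \in S1); case: (b \in S2).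
rewrite [RHS]big_mkcond /=; apply: eq_bigr => v _.
by case: (v \in S1) => /=; [rewrite card_sum | rewrite big1].
Qed.

Lemma arcs_setT : #|E| = arcs setT setT.
Proof. by apply: eq_card => p; rewrite !inE /= ?andbT. Qed.

Lemma arcs_splitl (S1 S2 X : {set 'I_n}) : arcs S1 S2 = arcs (S1 :&: X) S2 + arcs (S1 :\: X) S2.
Proof.
rewrite !arcs_sum (bigID (mem X)) /=; congr (_ + _); apply: eq_bigl => v.
  by rewrite inE andbC.
by rewrite !inE andbC.
Qed.

Lemma arcs_splitr (S1 S2 X : {set 'I_n}) : arcs S1 S2 = arcs S1 (S2 :&: X) + arcs S1 (S2 :\: X).
Proof.
rewrite !arcs_sum -big_split /=; apply: eq_bigr => v _.
by rewrite setIA setIDA cardsID.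
Qed.

Lemma subset_arcs (S1 S2 S1' S2' : {set 'I_n}) :
  S1 \subset S1' -> S2 \subset S2' -> arcs S1 S2 <= arcs S1' S2'.
Proof.
move=> /subsetP sub1 /subsetP sub2; apply/subset_leq_card/subsetP => -[a b].
by rewrite !inE /= => /and3P[-> /sub1 -> /sub2 ->].
Qed.

Lemma arcs_leq (S1 S2 : {set 'I_n}) k :
  (forall v, v \in S1 -> #|nbhd v :&: S2| <= k) -> arcs S1 S2 <= #|S1| * k.
Proof. by move=> deg; rewrite arcs_sum -sum_nat_const; apply: leq_sum. Qed.

Lemma arcs_geq (S1 S2 : {set 'I_n}) k :
  (forall v, v \in S1 -> k <= #|nbhd v :&: S2|) -> #|S1| * k <= arcs S1 S2.
Proof. by move=> deg; rewrite arcs_sum -sum_nat_const; apply: leq_sum. Qed.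

Lemma arcs_eq0 (S1 S2 : {set 'I_n}) :
  (forall x y, x \in S1 -> y \in S2 -> (x, y) \notin E) -> arcs S1 S2 = 0.
Proof.
move=> noE; apply/eqP; rewrite cards_eq0; apply/eqP/setP => -[a b]; rewrite !inE /=.
by apply/negbTE/and3P => -[ab /noE a_ /a_]; rewrite ab.
Qed.

Lemma card_edges_flip (P : pred ('I_n * 'I_n)) :
  #|[set p in E | P p]| = #|[set p in E | P (p.2, p.1)]|.
Proof.
pose flip (p : 'I_n * 'I_n) := (p.2, p.1).
have flip_inj : injective flip by apply: (can_inj (g := flip)); case.
rewrite -(card_imset _ flip_inj); apply: eq_card => -[a b]; rewrite !inE /=.
apply/imsetP/idP => [[[c d]]|/andP[ab Pba]].
  by rewrite inE /= => /andP[cd Pcd] [-> ->]; rewrite -Esym cd.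
by exists (b, a); rewrite // inE /= -Esym ab.
Qed.

Lemma arcs_sym (S1 S2 : {set 'I_n}) : arcs S1 S2 = arcs S2 S1.
Proof.
by rewrite /arcs card_edges_flip; apply: eq_card => -[a b]; rewrite !inE /= (andbC (b \in S1)).
Qed.

Lemma arcs_split_square Y X : arcs Y Y =
  arcs (Y :&: X) (Y :&: X) + (arcs (Y :\: X) (Y :&: X)).*2 + arcs (Y :\: X) (Y :\: X).
Proof.
rewrite (arcs_splitl _ _ X) (arcs_splitr (Y :&: X) _ X) (arcs_splitr (Y :\: X) _ X).
by rewrite (arcs_sym (Y :&: X) (Y :\: X)); lia.
Qed.

Lemma arcs_decomp S :
  #|E| = arcs S S + (arcs (~: S) S).*2 + arcs (~: S) (~: S).
Proof. by rewrite arcs_setT (arcs_split_square _ S) setTI setTD. Qed.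

Lemma nedges_mul2 : nedges E * 2 = #|E|.
Proof.
have -> : #|E| = #|[set p in E | p.1 < p.2] :|: [set p in E | p.2 < p.1]|.
  apply: eq_card => -[a b]; rewrite !inE /=.
  by case: (ltngtP a b) => [||/val_inj ->]; rewrite ?andbF ?andbT ?orbF ?(negbTE (Eirr _)).
rewrite cardsU (_ : _ :&: _ = set0) ?cards0 ?subn0; last first.
  by apply/setP => -[a b]; rewrite !inE /=; case: ltngtP; rewrite !andbF.
by rewrite /nedges muln2 -addnn card_edges_flip.
Qed.

(** * Complete bipartite subgraphs *)

Definition common_nbhd (L : {set 'I_n}) := [set v | L \subset nbhd v].

Lemma contains_Kbip l t (L R : {set 'I_n}) :
  l <= #|L| -> t <= #|R| -> (forall x y, x \in L -> y \in R -> (x, y) \in E) ->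
  contains E (Kbip l t).
Proof.
move=> lL tR LR.
have [fL fL_inj fL_L] := ord_injection lL.
have [fR fR_inj fR_R] := ord_injection tR.
have neqLR a b : fL a != fR b.
  by apply: contraTneq (LR _ _ (fL_L a) (fR_R b)) => ->; apply: Eirr.
apply/existsP; exists [ffun i => match split i with inl a => fL a | inr b => fR b end].
apply/andP; split.
  apply/injectiveP => i j; rewrite !ffunE => fij; apply: (can_inj splitK).
  move: fij; case: (split i) => a; case: (split j) => b fab.
  - by rewrite (fL_inj _ _ fab).
  - by move: (neqLR a b); rewrite fab eqxx.
  - by move: (neqLR b a); rewrite fab eqxx.
  - by rewrite (fR_inj _ _ fab).
apply/forallP => i; apply/forallP => j; apply/implyP; rewrite /= !ffunE.
case: splitP => a _; case: splitP => b _ //= _; last rewrite Esym; exact: LR.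
Qed.

Lemma Kbip_free_common_nbhd l t L :
  ~~ contains E (Kbip l t) -> #|L| = l -> #|common_nbhd L| < t.
Proof.
move=> Kfree cardL; rewrite ltnNge; apply: contra Kfree => tN.
apply: (contains_Kbip (L := L) (R := common_nbhd L)) => [|//|x y xL].
  by rewrite cardL.
by rewrite inE => /subsetP/(_ x xL); rewrite inE Esym.
Qed.

Lemma Kbip_free_sum_bin l t W :
  ~~ contains E (Kbip l t) -> \sum_v 'C(#|nbhd v :&: W|, l) <= (t - 1) * 'C(#|W|, l).
Proof.
(* Double count the pairs (v, A) with A an l-subset of W inside nbhd v. *)
move=> Kfree; pose draw (B A : {set 'I_n}) : nat := (A \subset B) && (#|A| == l).
have drawsE B : 'C(#|B|, l) = \sum_A draw B A.
  by rewrite -cards_draws card_sum; apply: eq_bigr => A _; rewrite inE.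
under eq_bigr do rewrite drawsE; rewrite exchange_big drawsE big_distrr /=.
apply: leq_sum => A _; rewrite /draw.
case: (boolP ((A \subset W) && (#|A| == l))) => [/andP[AW /eqP cardA] | notA].
  suff -> : \sum_v draw (nbhd v :&: W) A = #|common_nbhd A|.
    by have := Kbip_free_common_nbhd Kfree cardA; lia.
  by rewrite card_sum; apply: eq_bigr => v _; rewrite /draw subsetI AW cardA eqxx inE !andbT.
rewrite muln0 big1 // => v _; apply/eqP; rewrite eqb0.
by apply: contra notA; rewrite subsetI => /andP[/andP[_ ->] ->].
Qed.

Lemma Kbip_free_arcs l t W : 0 < l -> ~~ contains E (Kbip l t) ->
  arcs W W + (arcs (~: W) W).*2 <=
    #|W| * l.-1 + (#|~: W| * l.-1).*2 + ((t - 1) * 'C(#|W|, l)).*2.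
Proof.
move=> l_gt0 Kfree.
have arcs_bin S : arcs S W <= #|S| * l.-1 + \sum_(v in S) 'C(#|nbhd v :&: W|, l).
  rewrite arcs_sum -sum_nat_const -big_split; apply: leq_sum => v _; exact: leq_bin_pred.
have split_sum : \sum_v 'C(#|nbhd v :&: W|, l) =
    \sum_(v in W) 'C(#|nbhd v :&: W|, l) + \sum_(v in ~: W) 'C(#|nbhd v :&: W|, l).
  by rewrite (bigID (mem W)) /=; congr (_ + _); apply: eq_bigl => v; rewrite inE.
have := Kbip_free_sum_bin W Kfree; rewrite split_sum.
by have := arcs_bin W; have := arcs_bin (~: W); lia.
Qed.

Lemma arcs_setU_pendant S U : [disjoint S & U] ->
  (forall u, u \in U -> 0 < #|nbhd u :&: S|) -> arcs S S + #|U|.*2 <= arcs (S :|: U) (S :|: U).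
Proof.
move=> SU Uadj; have US : (S :|: U) :\: S = U.
  by rewrite setDUl setDv set0U; apply/setDidPl; rewrite disjoint_sym.
rewrite (arcs_split_square (S :|: U) S) setUK US; have := arcs_geq Uadj; rewrite muln1; lia.
Qed.

Lemma arcs_setU_indep S F : (forall x y, x \in F -> y \in F -> (x, y) \notin E) ->
  (forall v, v \in S -> #|nbhd v :&: F| <= 1) -> arcs (S :|: F) (S :|: F) <= arcs S S + #|S|.*2.
Proof.
move=> Findep Sdeg; have FS : (S :|: F) :\: S = F :\: S by rewrite setDUl setDv set0U.
have FS_indep x y : x \in F :\: S -> y \in F :\: S -> (x, y) \notin E.
  by rewrite !inE => /andP[_ xF] /andP[_ yF]; apply: Findep.
rewrite (arcs_split_square (S :|: F) S) setUK FS (arcs_sym (F :\: S) S) (arcs_eq0 FS_indep).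
have := arcs_leq Sdeg; have := subset_arcs (subxx S) (subsetDl F S); rewrite muln1 -addnn; lia.
Qed.

(** * Matchings *)

(* A matching is encoded as an involution of the vertex set that swaps the two ends of each
   of its edges and fixes the uncovered vertices; [matching A m] also asks that every
   covered vertex lie in A. *)
Definition matching (A : {set 'I_n}) (m : {ffun 'I_n -> 'I_n}) :=
  [forall x, (m x != x) ==> [&& m (m x) == x, (x, m x) \in E & x \in A]].

Definition matched (m : {ffun 'I_n -> 'I_n}) := [set x | m x != x].

Implicit Types m : {ffun 'I_n -> 'I_n}.

Lemma matchingP A m :
  reflect (forall x, m x != x -> [/\ m (m x) = x, (x, m x) \in E & x \in A]) (matching A m).
Proof.
apply: (iffP forallP) => mP x; last by apply/implyP => /mP[-> -> ->]; rewrite eqxx.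
by move=> mx; move: (mP x); rewrite mx => /and3P[/eqP].
Qed.

Section Matching.
Variables (A : {set 'I_n}) (m : {ffun 'I_n -> 'I_n}).
Hypothesis mA : matching A m.

Lemma matching_invol : involutive m.
Proof.
move=> x; have [mx|mx] := eqVneq (m x) x; first by rewrite !mx.
by case: (matchingP _ _ mA x mx).
Qed.

Lemma matching_inj : injective m. Proof. exact: inv_inj matching_invol. Qed.

Lemma matching_edge x : m x != x -> (x, m x) \in E.
Proof. by case/(matchingP _ _ mA). Qed.

Lemma matching_dom x : m x != x -> x \in A.
Proof. by case/(matchingP _ _ mA). Qed.

Lemma matching_mate_matched x : m x != x -> m (m x) != m x.
Proof. by rewrite matching_invol eq_sym. Qed.

Lemma matching_subset A' : A \subset A' -> matching A' m.
Proof. by move=> /subsetP AA'; apply/matchingP => x /(matchingP _ _ mA)[-> -> /AA']. Qed.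

End Matching.

Definition add_edge m x y := [ffun z => if z == x then y else if z == y then x else m z].

Definition remove_edge m x := [ffun z => if (z == x) || (z == m x) then z else m z].

Section AddEdge.
Variables (m : {ffun 'I_n -> 'I_n}) (x y : 'I_n).
Hypotheses (mx : m x = x) (my : m y = y) (x_y : x != y).

Let add_x : add_edge m x y x = y. Proof. by rewrite ffunE eqxx. Qed.
Let add_y : add_edge m x y y = x. Proof. by rewrite ffunE eq_sym (negbTE x_y) eqxx. Qed.
Let add_z z : z != x -> z != y -> add_edge m x y z = m z.
Proof. by move=> zx zy; rewrite ffunE (negbTE zx) (negbTE zy). Qed.

Lemma matching_add_edge A :
  matching A m -> (x, y) \in E -> x \in A -> y \in A -> matching A (add_edge m x y).
Proof.
move=> mA xy xA yA; apply/matchingP => z.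
have [->|zx] := eqVneq z x; first by rewrite add_x add_y.
have [->|zy] := eqVneq z y; first by rewrite add_y add_x -Esym.
rewrite add_z // => mz; have [mmz mzE mzA] := matchingP _ _ mA z mz.
have mzx : m z != x by apply: contraNneq zx => mzx; rewrite -mmz mzx mx.
have mzy : m z != y by apply: contraNneq zy => mzy; rewrite -mmz mzy my.
by rewrite add_z // mmz.
Qed.

Lemma card_matched_add_edge : #|matched (add_edge m x y)| = #|matched m| + 2.
Proof.
have -> : matched (add_edge m x y) = [set x; y] :|: matched m.
  apply/setP => z; rewrite !inE.
  have [->|zx] := eqVneq z x; first by rewrite add_x eq_sym x_y.
  have [->|zy] := eqVneq z y; first by rewrite add_y x_y orbT.
  by rewrite add_z.
rewrite cardsU cards2 x_y addnC (_ : _ :&: _ = set0) ?cards0 ?subn0 //.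
apply/setP => z; rewrite !inE andb_orl; apply/negbTE; rewrite negb_or.
by apply/andP; split; apply/andP => -[/eqP-> ]; rewrite ?mx ?my eqxx.
Qed.

End AddEdge.

Section RemoveEdge.
Variables (A : {set 'I_n}) (m : {ffun 'I_n -> 'I_n}) (x : 'I_n).
Hypotheses (mA : matching A m) (mx : m x != x).

Let rem_x : remove_edge m x x = x. Proof. by rewrite ffunE eqxx. Qed.
Let rem_mx : remove_edge m x (m x) = m x. Proof. by rewrite ffunE eqxx orbT. Qed.
Let rem_z z : z != x -> z != m x -> remove_edge m x z = m z.
Proof. by move=> zx zmx; rewrite ffunE (negbTE zx) (negbTE zmx). Qed.

Let matched_remove_edge : matched (remove_edge m x) = matched m :\: [set x; m x].
Proof.
apply/setP => z; rewrite !inE negb_or.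
have [->|zx] := eqVneq z x; first by rewrite rem_x eqxx.
have [->|zmx] := eqVneq z (m x); first by rewrite rem_mx eqxx.
by rewrite rem_z.
Qed.

Lemma matching_remove_edge : matching A (remove_edge m x).
Proof.
apply/matchingP => z rz; have : z \in matched (remove_edge m x) by rewrite inE.
rewrite matched_remove_edge !inE negb_or => /andP[/andP[zx zmx] mz].
have [mmz mzE mzA] := matchingP _ _ mA z mz.
have mzx : m z != x by apply: contraNneq zmx => <-; rewrite mmz.
have mzmx : m z != m x by rewrite (inj_eq (matching_inj mA)).
by rewrite !rem_z.
Qed.

Lemma card_matched_remove_edge : #|matched (remove_edge m x)| + 2 = #|matched m|.
Proof.
have sub : [set x; m x] \subset matched m.
  apply/subsetP => z; rewrite !inE => /orP[]/eqP->; first exact: mx.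
  exact: (matching_mate_matched mA mx).
rewrite matched_remove_edge cardsD (setIidPr sub) cards2 eq_sym mx.
by have := subset_leq_card sub; rewrite cards2 eq_sym mx; lia.
Qed.

End RemoveEdge.

Lemma augment_path3 A m x a c :
  matching A m -> m x != x -> m a = a -> m c = c -> a != c ->
  (x, a) \in E -> (m x, c) \in E -> a \in A -> c \in A ->
  exists2 m', matching A m' & #|matched m'| = #|matched m| + 2.
Proof.
move=> mA mx ma mc a_c xa mxc aA cA.
have free_neq z w : m z = z -> m w != w -> z != w.
  by move=> mz mw; apply: contraNneq mw => <-; rewrite mz.
have mmx := matching_mate_matched mA mx.
have a_x := free_neq _ _ ma mx; have a_mx := free_neq _ _ ma mmx.
have c_x := free_neq _ _ mc mx; have c_mx := free_neq _ _ mc mmx.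
pose m1 := remove_edge m x; pose m2 := add_edge m1 x a; pose m3 := add_edge m2 (m x) c.
have m1_fix z : z != x -> z != m x -> m z = z -> m1 z = z.
  by move=> zx zmx mz; rewrite ffunE (negbTE zx) (negbTE zmx).
have m1x : m1 x = x by rewrite ffunE eqxx.
have m1a : m1 a = a := m1_fix a a_x a_mx ma.
have m2mx : m2 (m x) = m x.
  by rewrite ffunE (negbTE mx) eq_sym (negbTE a_mx) ffunE eqxx orbT.
have m2c : m2 c = c by rewrite ffunE (negbTE c_x) eq_sym (negbTE a_c) m1_fix.
have m2A : matching A m2.
  apply: matching_add_edge => //; first by rewrite eq_sym.
    exact: matching_remove_edge.
  exact: (matching_dom mA mx).
exists m3.
  apply: matching_add_edge => //; first by rewrite eq_sym.
  exact: (matching_dom mA mmx).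
rewrite card_matched_add_edge 1?eq_sym // card_matched_add_edge 1?eq_sym //.
by rewrite -(card_matched_remove_edge mA mx) -!addnA.
Qed.

Lemma card_matched_lower A m :
  matching A m -> #|matched m| = #|[set x : 'I_n | x < m x]|.*2.
Proof.
move=> mA; set lo := [set x : 'I_n | x < m x].
have -> : matched m = lo :|: [set m x | x in lo].
  apply/setP => z; rewrite !inE; apply/idP/idP => [mz|].
    case: (ltngtP z (m z)) => [//|gt|/val_inj eq]; last by rewrite -eq eqxx in mz.
    by apply/imsetP; exists (m z); rewrite ?inE (matching_invol mA).
  case/orP=> [lt|/imsetP[x]]; first by apply: contraTneq lt => ->; rewrite ltnn.
  by rewrite inE => lt ->; rewrite (matching_invol mA); apply: contraTneq lt => <-; rewrite ltnn.
rewrite cardsU card_imset; last exact: matching_inj mA.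
rewrite (_ : _ :&: _ = set0) ?cards0 ?subn0 -?addnn //.
apply/setP => z; rewrite !inE; apply/negbTE/andP => -[lt /imsetP[x]].
by rewrite inE => lt' eq; move: lt; rewrite eq (matching_invol mA) ltnNge ltnW.
Qed.

Lemma matching_contains A m k :
  matching A m -> k.*2 <= #|matched m| -> contains E (Mmatch k).
Proof.
move=> mA; rewrite (card_matched_lower mA) leq_double => klo.
have [g g_inj g_lo] := ord_injection klo.
have half_lt (i : 'I_(k.*2)) : i./2 < k by rewrite ltn_half_double.
pose h i := g (Ordinal (half_lt i)).
have h_lt i : h i < m (h i) by have := g_lo (Ordinal (half_lt i)); rewrite inE.
have h_eq i j : h i = h j -> i./2 = j./2 by move/g_inj/(congr1 val).
have h_matched i : m (h i) != h i by apply: contraTneq (h_lt i) => ->; rewrite ltnn.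
pose f (i : 'I_(k.*2)) := if odd i then m (h i) else h i.
apply/existsP; exists [ffun i => f i]; apply/andP; split.
  apply/injectiveP => i j; rewrite !ffunE /f => fij; apply: val_inj => /=.
  rewrite -(odd_double_half i) -(odd_double_half j).
  move: fij (h_lt i) (h_lt j); case: (odd i); case: (odd j) => fij.
  - by rewrite (h_eq _ _ (matching_inj mA fij)).
  - by rewrite -fij (matching_invol mA); lia.
  - by rewrite fij (matching_invol mA); lia.
  - by rewrite (h_eq _ _ fij).
apply/forallP => i; apply/forallP => j; apply/implyP => /andP[/eqP ij i_j].
have hij : h i = h j by congr g; apply: val_inj.
have odd_ij : odd i != odd j.
  apply: contra i_j => /eqP oij; apply/eqP/val_inj => /=.
  by rewrite -(odd_double_half i) -(odd_double_half j) oij ij.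
rewrite !ffunE /f -hij; have hE := matching_edge mA (h_matched i).
by case: (odd i) odd_ij; case: (odd j) => //= _; rewrite // Esym.
Qed.

Lemma extend_matching m R :
  matching setT m -> (forall v, v \in R -> m v = v) ->
  (forall v, v \in R -> #|matched m| + #|R|.*2 <= #|nbhd v|) ->
  exists2 m', matching setT m' & #|matched m'| = #|matched m| + #|R|.*2.
Proof.
move=> mA Rfree Rdeg; move: {2}#|R| (erefl #|R|) => k cardR; rewrite cardR in Rdeg *.
elim: k m R cardR mA Rfree Rdeg => [|k IH] m R cardR mA Rfree Rdeg.
  by exists m; rewrite ?addn0.
have [x xR] : exists x, x \in R by apply/card_gt0P; rewrite cardR.
have [u] : exists u, u \in nbhd x :\: (matched m :|: R).
  apply/card_gt0P; have := Rdeg x xR; have := cardsU (matched m) R.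
  have := cardsID (matched m :|: R) (nbhd x).
  have := subset_leq_card (subsetIr (nbhd x) (matched m :|: R)).
  by rewrite cardR doubleS; lia.
rewrite !inE negb_or => /andP[/andP[/negPn/eqP mu uR] xu].
have x_u : x != u by apply: contraTneq xu => ->.
have mx := Rfree x xR.
have m1A := matching_add_edge mx mu x_u mA xu (in_setT x) (in_setT u).
have cardR1 : #|R :\ x| = k by move: cardR; rewrite (cardsD1 x R) xR => -[].
have R1free v : v \in R :\ x -> add_edge m x u v = v.
  rewrite !inE => /andP[vx vR]; have vu : v != u by apply: contraTneq vR => ->.
  by rewrite ffunE (negbTE vx) (negbTE vu) Rfree.
have R1deg v : v \in R :\ x -> #|matched (add_edge m x u)| + k.*2 <= #|nbhd v|.
  rewrite !inE card_matched_add_edge // => /andP[_ vR].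
  by have := Rdeg v vR; rewrite doubleS; lia.
have [m' m'A card_m'] := IH _ _ cardR1 m1A R1free R1deg.
by exists m' => //; rewrite card_m' card_matched_add_edge // doubleS; lia.
Qed.

End Graph.

(** * Induced subgraphs and ex *)

Lemma leq_nedges_ex n (E : {set 'I_n * 'I_n}) Fs :
  simple_graph E -> all (fun H => ~~ contains E H) Fs -> nedges E <= ex n Fs.
Proof. by move=> sE free; apply: leq_bigmax_cond; rewrite sE. Qed.

Lemma ex_add_leq n Fs c k : c <= k ->
  (forall E : {set 'I_n * 'I_n},
     simple_graph E -> all (fun H => ~~ contains E H) Fs -> nedges E + c <= k) ->
  ex n Fs + c <= k.
Proof.
move=> ck bound; rewrite addnC -leq_subRL //; apply/bigmax_leqP => E /andP[sE free].
by rewrite leq_subRL // addnC; apply: bound.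
Qed.

Section InducedCopy.
Variables (n m : nat) (E : {set 'I_n * 'I_n}) (S : {set 'I_n}) (x0 : 'I_n).
Hypothesis Esym : forall x y, ((x, y) \in E) = ((y, x) \in E).
Hypothesis Eirr : forall x, (x, x) \notin E.

Let label (k : nat) := nth x0 (enum S) k.

Let label_in k : k < #|S| -> label k \in S.
Proof. by move=> kS; rewrite -mem_enum mem_nth // -cardE. Qed.

Let label_inj (i j : 'I_m) : i < #|S| -> j < #|S| -> label i = label j -> i = j.
Proof.
move=> iS jS /eqP; rewrite nth_uniq ?enum_uniq -?cardE // => /eqP; exact: val_inj.
Qed.

(* The subgraph induced by S, its vertices relabelled as the first #|S| elements of 'I_m. *)
Definition induced_copy : {set 'I_m * 'I_m} :=
  [set p : 'I_m * 'I_m | [&& p.1 < #|S|, p.2 < #|S| & (label p.1, label p.2) \in E]].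

Lemma induced_copy_simple : simple_graph induced_copy.
Proof.
apply/andP; split; apply/forallP => x; last by rewrite inE (negbTE (Eirr _)) !andbF.
by apply/forallP => y; rewrite !inE /= Esym; case: (x < #|S|); case: (y < #|S|).
Qed.

Lemma card_induced_copy : #|S| <= m -> #|induced_copy| = arcs E S S.
Proof.
move=> Sm; pose lab2 (p : 'I_m * 'I_m) := (label p.1, label p.2).
rewrite /arcs -(card_in_imset (f := lab2)); last first.
  move=> [i1 j1] [i2 j2]; rewrite !inE /= => /and3P[i1S j1S _] /and3P[i2S j2S _] [e1 e2].
  by rewrite (label_inj i1S i2S e1) (label_inj j1S j2S e2).
apply: eq_card => -[a b]; rewrite !inE /=; apply/imsetP/and3P => [[[i j]]|[ab aS bS]].
  by rewrite inE /= => /and3P[iS jS ijE] [-> ->]; rewrite ijE !label_in.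
have idx_lt x : x \in S -> index x (enum S) < m.
  by move=> xS; apply: leq_trans Sm; rewrite cardE index_mem mem_enum.
exists (Ordinal (idx_lt a aS), Ordinal (idx_lt b bS)).
  by rewrite inE /= /label !nth_index ?mem_enum // cardE !index_mem !mem_enum aS bS.
by rewrite /lab2 /label /= !nth_index ?mem_enum.
Qed.

Lemma induced_copy_free H : (forall i, exists j, @pe H i j) ->
  ~~ contains E H -> ~~ contains induced_copy H.
Proof.
move=> no_isolated; apply: contra => /existsP[f /andP[/injectiveP f_inj /forallP f_edge]].
have f_lt i : f i < #|S|.
  have [j ij] := no_isolated i.
  by move/forallP: (f_edge i) => /(_ j); rewrite ij inE => /andP[].
apply/existsP; exists [ffun i => label (f i)]; apply/andP; split.
  by apply/injectiveP => i j; rewrite !ffunE => /(label_inj (f_lt i) (f_lt j)) /f_inj.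
apply/forallP => i; apply/forallP => j; apply/implyP => ij; rewrite !ffunE.
by move/forallP: (f_edge i) => /(_ j); rewrite ij inE => /and3P[].
Qed.

End InducedCopy.

Lemma arcs_leq_ex n m (E : {set 'I_n * 'I_n}) (H : pattern) (S : {set 'I_n}) :
  (forall x y, ((x, y) \in E) = ((y, x) \in E)) -> (forall x, (x, x) \notin E) ->
  (forall i, exists j, @pe H i j) -> ~~ contains E H -> #|S| <= m ->
  arcs E S S <= (ex m [:: H]).*2.
Proof.
move=> Esym Eirr no_isolated free Sm.
have [->|[x0 _]] := set_0Vmem S; first by rewrite (arcs_eq0 (S1 := set0)) // => x y; rewrite inE.
have [E'sym E'irr] := simple_graphP (induced_copy_simple m S x0 Esym Eirr).
rewrite -(card_induced_copy E x0 Sm) -(nedges_mul2 E'sym E'irr) muln2 leq_double.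
apply: leq_nedges_ex; first exact: induced_copy_simple.
by rewrite /= andbT induced_copy_free.
Qed.

Lemma Kbip_no_isolated l t : 0 < l -> 0 < t -> forall i, exists j, @pe (Kbip l t) i j.
Proof.
move=> l_gt0 t_gt0 i; have [il|li] := ltnP i l.
  have l_lt : l < l + t by rewrite -{1}(addn0 l) ltn_add2l.
  by exists (Ordinal l_lt) => /=; rewrite il ltnn.
by exists (Ordinal (ltn_addr t l_gt0)) => /=; rewrite ltnNge li l_gt0.
Qed.

Lemma many_high_arith l t s w : 3 <= l -> l <= t -> l < s -> l.-1 <= w <= s ->
  l * l.-1 + 2 + (t - 1) * 'C(w, l) * 2 <= w * l.-1 + (t - 1) * 'C(s, l) * 2.
Proof.
move=> l3 lt ls /andP[lw ws].
have Csl : l.+1 <= 'C(s, l) by rewrite -{1}binSn leq_bin2l.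
have [wl|wl] := ltnP l w.
  have := leq_mul wl (leqnn l.-1); have := leq_mul (leqnn (t - 1)) (leq_bin2l l ws).
  by rewrite mulSn; lia.
have [->|w_l] := eqVneq w l.
  have C2 : 2 <= 'C(s, l) by lia.
  by have := leq_mul (leqnn (t - 1)) C2; rewrite binn; lia.
have -> : w = l.-1 by lia.
rewrite bin_small; last by lia.
have t1 : 1 <= t - 1 by lia.
have := leq_mul t1 Csl; rewrite -[in l * _](ltn_predK l3) mulSn; lia.
Qed.

Lemma few_high_arith l s n : 2 <= l <= s -> 2 * 'C(3 * s, 2) <= n ->
  (l - 2) * n + s.*2 * s.*2.+1 + 'C(l, 2) <= (l - 1) * n.
Proof.
move=> /andP[l2 ls] sn.
have -> : (l - 1) * n = (l - 2) * n + n by rewrite -mulSnr; congr (_ * _); lia.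
rewrite -addnA leq_add2l.
have := bin2_mul2 (3 * s); have := bin2_mul2 l.
have := leq_mul ls (leq_trans (leq_pred l) ls).
nia.
Qed.

(** * The structure of an extremal graph *)

Section Extremal.
Variables (n : nat) (E : {set 'I_n * 'I_n}) (s : nat).
Hypothesis Esym : forall x y, ((x, y) \in E) = ((y, x) \in E).
Hypothesis Eirr : forall x, (x, x) \notin E.

Definition B := [set v | s.*2.+1 < #|nbhd E v|].

Let id_matching : matching E (~: B) [ffun x => x].
Proof. by apply/matchingP => x; rewrite ffunE eqxx. Qed.

Definition M := [arg max_(m > [ffun x => x] | matching E (~: B) m) #|matched m|].

Lemma matching_M : matching E (~: B) M.
Proof. by rewrite /M; case: (arg_maxnP _ id_matching). Qed.

Lemma M_max m : matching E (~: B) m -> #|matched m| <= #|matched M|.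
Proof. by rewrite /M; case: (arg_maxnP _ id_matching) => m' _; apply. Qed.

Lemma M_invol : involutive M. Proof. exact: matching_invol matching_M. Qed.

Lemma B_free v : v \in B -> M v = v.
Proof.
move=> vB; apply/eqP; apply: contraTT vB => Mv.
by rewrite -in_setC; apply: (matching_dom matching_M Mv).
Qed.

Definition F := [set v | (v \notin B) && (M v == v)].

Lemma F_free v : v \in F -> v \in ~: B /\ M v = v.
Proof. by rewrite !inE => /andP[vB /eqP]. Qed.

Lemma F_indep x y : x \in F -> y \in F -> (x, y) \notin E.
Proof.
move=> /F_free[xB Mx] /F_free[yB My]; apply/negP => xy.
have x_y : x != y by apply: contraTneq xy => ->.
have := M_max (matching_add_edge Esym Mx My x_y matching_M xy xB yB).
by rewrite card_matched_add_edge //; lia.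
Qed.

Definition lonely v := #|nbhd E v :&: F| <= 1.

(* Otherwise two distinct free neighbours a of x and c of M x give the augmenting path
   a, x, M x, c. *)
Lemma lonely_M x : M x != x -> lonely x || lonely (M x).
Proof.
move=> Mx; apply/negPn/negP; rewrite negb_or /lonely -!ltnNge => /andP[x2 Mx2].
have [a] : exists a, a \in nbhd E x :&: F by apply/card_gt0P; lia.
rewrite in_setI [a \in nbhd E x]inE => /andP[xa /F_free[aB Ma]].
have [c] : exists c, c \in (nbhd E (M x) :&: F) :\ a.
  by apply/card_gt0P; move: Mx2; rewrite (cardsD1 a); case: (a \in _); lia.
rewrite in_setD1 in_setI [c \in nbhd E (M x)]inE => /and3P[c_a Mxc /F_free[cB Mc]].
have a_c : a != c by rewrite eq_sym.
have [m' m'B card_m'] := augment_path3 Esym matching_M Mx Ma Mc a_c xa Mxc aB cB.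
by have := M_max m'B; rewrite card_m'; lia.
Qed.

(* P contains one lonely end of every edge of M, and Q the other end. *)
Definition P := [set x | [&& M x != x, lonely x & lonely (M x) ==> (x < M x)]].
Definition Q := [set x | (M x != x) && (x \notin P)].

Lemma P_matched x : x \in P -> M x != x. Proof. by rewrite inE => /andP[]. Qed.

Lemma P_lonely x : x \in P -> lonely x. Proof. by rewrite inE => /and3P[]. Qed.

Lemma P_mate x : M x != x -> (M x \in P) = (x \notin P).
Proof.
move=> Mx; have xMx : (x : nat) != M x by apply: contraNneq Mx => /val_inj <-.
have := lonely_M Mx; rewrite !inE M_invol Mx eq_sym Mx /=.
by case: (lonely x); case: (lonely (M x)) => //= _; move: xMx; case: ltngtP.
Qed.

Lemma Q_mate : Q = M @: P.
Proof.
apply/setP => x; rewrite inE; apply/andP/imsetP => [[Mx xP]|[y yP ->]].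
  by exists (M x); rewrite ?M_invol // P_mate.
have My := P_matched yP.
by rewrite M_invol eq_sym My P_mate // yP.
Qed.

Lemma card_Q : #|Q| = #|P|.
Proof. by rewrite Q_mate card_imset //; apply: matching_inj matching_M. Qed.

Lemma card_matched_M : #|matched M| = #|Q|.*2.
Proof.
have -> : matched M = P :|: Q.
  apply/setP => x; rewrite in_setU [x \in Q]inE [x \in matched M]inE.
  by case: (boolP (x \in P)) => [xP|_]; rewrite ?(P_matched xP) ?andbT.
rewrite cardsU (_ : P :&: Q = set0) ?cards0 ?subn0 ?card_Q ?addnn //.
by apply/setP => x; rewrite in_setI [x \in Q]inE in_set0; case: (x \in P); rewrite ?andbF.
Qed.

Hypothesis Mfree : ~~ contains E (Mmatch s.+1).

Lemma card_B_Q : #|B| + #|Q| <= s.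
Proof.
rewrite leqNgt; apply: contraNN Mfree => BQ.
have [f f_inj fB] : exists2 f : 'I_(s.+1 - #|Q|) -> 'I_n, injective f & forall i, f i \in B.
  by apply: ord_injection; lia.
pose R := [set f i | i in 'I_(s.+1 - #|Q|)].
have cardR : #|R| = s.+1 - #|Q| by rewrite card_imset // card_ord.
have RB v : v \in R -> v \in B by case/imsetP => i _ ->.
have Rfree v : v \in R -> M v = v by move/RB/B_free.
have Rdeg v : v \in R -> #|matched M| + #|R|.*2 <= #|nbhd E v|.
  move=> vR; have R_gt0 : 0 < #|R| by apply/card_gt0P; exists v.
  by have := RB v vR; rewrite inE card_matched_M; lia.
have MT := matching_subset matching_M (subsetT (~: B)).
have [m mT card_m] := extend_matching Esym Eirr MT Rfree Rdeg.
by apply: (matching_contains Esym mT); rewrite card_m card_matched_M cardR; lia.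
Qed.

Definition W := B :|: Q.

Lemma card_W : #|W| = #|B| + #|Q|.
Proof.
rewrite cardsU (_ : B :&: Q = set0) ?cards0 ?subn0 //.
apply/setP => v; rewrite in_setI in_set0 [v \in Q]inE.
by apply/negbTE/andP => -[/B_free-> /andP[]]; rewrite eqxx.
Qed.

Lemma setC_W : ~: W = P :|: F.
Proof.
apply/setP => v; rewrite in_setC !in_setU [v \in Q]inE [v \in F]inE.
case: (boolP (v \in P)) => [vP|_] /=; last by rewrite andbT negb_or negbK.
by rewrite andbF orbF; apply: contraNN (P_matched vP) => /B_free->.
Qed.

Lemma arcs_setC_W : arcs E (~: W) (~: W) <= arcs E P P + #|P|.*2.
Proof. by rewrite setC_W; apply: (arcs_setU_indep Esym F_indep); apply: P_lonely. Qed.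

Lemma arcs_P_pendant q : q \in Q ->
  arcs E P P + (#|Q| - 1).*2 <= arcs E (P :|: Q :\ q) (P :|: Q :\ q).
Proof.
move=> qQ; rewrite (cardsD1 q Q) qQ add1n subSS subn0.
apply: (arcs_setU_pendant Esym) => [|u].
  rewrite disjoint_sym disjoints_subset; apply/subsetP => u; rewrite in_setD1 in_setC.
  by rewrite [u \in Q]inE => /andP[_ /andP[]].
rewrite in_setD1 Q_mate => /andP[_ /imsetP[p pP ->]].
apply/card_gt0P; exists p; rewrite in_setI pP andbT inE -Esym.
exact: (matching_edge matching_M (P_matched pP)).
Qed.

Variable l : nat.

Lemma nedges_few_high : #|B| <= l - 2 -> nedges E <= (l - 2) * n + s.*2 * s.*2.+1.
Proof.
move=> Bl; set C := ~: F.
have cover : #|E| <= (arcs E C setT).*2.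
  rewrite (arcs_decomp Esym C) setCK (arcs_eq0 F_indep) addn0.
  by rewrite (arcs_sym Esym F C) (arcs_splitr E C setT C) setTI setTD setCK; lia.
have BC : C :&: B = B.
  by apply/setIidPr/subsetP => v vB; rewrite in_setC [v \in F]inE vB.
have deg : arcs E C setT <= #|B| * n + #|C :\: B| * s.*2.+1.
  rewrite (arcs_splitl E C setT B) BC; apply: leq_add; apply: arcs_leq => v.
    by move=> _; rewrite setIT; have := max_card (nbhd E v); rewrite card_ord.
  by rewrite setIT in_setD inE -leqNgt => /andP[].
have CB : #|C :\: B| <= s.*2.
  have : C :\: B \subset matched M.
    apply/subsetP => v; rewrite in_setD in_setC [v \in F]inE [v \in matched M]inE.
    by case/andP=> vB; rewrite vB.
  by move/subset_leq_card; rewrite card_matched_M; have := card_B_Q; lia.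
have := leq_mul Bl (leqnn n); have := leq_mul CB (leqnn s.*2.+1).
by have := nedges_mul2 Esym Eirr; lia.
Qed.

Variable t : nat.
Hypothesis Kfree : ~~ contains E (Kbip l t).

Lemma arcs_setC_W_leq_ex : 0 < l -> 0 < t -> l.-1 <= #|B| ->
  arcs E (~: W) (~: W) <= (ex (2 * (s - l) + 1) [:: Kbip l t]).*2 + 2.
Proof.
move=> l_gt0 t_gt0 lB; apply: leq_trans arcs_setC_W _.
case: (set_0Vmem Q) => [Q0|[q qQ]].
  have /eqP : #|P| = 0 by rewrite -card_Q Q0 cards0.
  by rewrite cards_eq0 => /eqP->; rewrite cards0 (arcs_eq0 (S1 := set0)) // => x y; rewrite inE.
have cardT : #|P :|: Q :\ q| <= 2 * (s - l) + 1.
  have := cardsD1 q Q; have := cardsU P (Q :\ q); have := card_B_Q.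
  by rewrite qQ card_Q; lia.
have := arcs_leq_ex Esym Eirr (Kbip_no_isolated l_gt0 t_gt0) Kfree cardT.
by have := arcs_P_pendant qQ; rewrite card_Q; lia.
Qed.

Lemma nedges_many_high : 3 <= l -> l <= t -> l < s -> l.-1 <= #|B| ->
  nedges E + 'C(l, 2) <= (t - 1) * 'C(s, l) + (l - 1) * n + ex (2 * (s - l) + 1) [:: Kbip l t].
Proof.
move=> l3 lt ls lB.
have l_gt0 : 0 < l by lia.
have t_gt0 : 0 < t by lia.
have Wn : #|W| * l.-1 + #|~: W| * l.-1 = (l - 1) * n.
  by rewrite -mulnDl cardsC card_ord mulnC subn1.
have wlS : l.-1 <= #|W| <= s by rewrite card_W; have := card_B_Q; lia.
have count := leq_add (Kbip_free_arcs Esym Eirr W l_gt0 Kfree) (arcs_setC_W_leq_ex l_gt0 t_gt0 lB).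
rewrite -(arcs_decomp Esym W) -(nedges_mul2 Esym Eirr) in count.
have := many_high_arith l3 lt ls wlS; have := bin2_mul2 l; move: Wn count.
(* The products occur in convertible but syntactically different forms: lia needs atoms. *)
by move: (#|W| * l.-1) (#|~: W| * l.-1) ((t - 1) * 'C(#|W|, l)) => *; lia.
Qed.

End Extremal.

Theorem corollary3p6 (l t s n : nat) :
  3 <= l -> l <= t -> l.+1 <= s -> 2 * 'C(3 * s, 2) <= n ->
  ex n [:: Kbip l t; Mmatch s.+1] + 'C(l, 2) <=
    (t - 1) * 'C(s, l) + (l - 1) * n + ex (2 * (s - l) + 1) [:: Kbip l t].
Proof.
move=> l3 lt ls sn; have l2s : 2 <= l <= s by lia.
have few_bound := few_high_arith l2s sn.
set X := ex (2 * (s - l) + 1) [:: Kbip l t].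
have leq_bound : (l - 1) * n <= (t - 1) * 'C(s, l) + (l - 1) * n + X by rewrite addnAC leq_addl.
apply: ex_add_leq => [|E sE]; first exact: leq_trans (leq_trans (leq_addl _ _) few_bound) leq_bound.
rewrite /= andbT => /andP[Kfree Mfree]; have [Esym Eirr] := simple_graphP sE.
have [few|many] := leqP #|B E s| (l - 2); last by apply: nedges_many_high => //; lia.
apply: leq_trans leq_bound; apply: leq_trans few_bound; rewrite leq_add2r.
exact: (nedges_few_high Esym Eirr Mfree few).
Qed.
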